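(* Let $G=(V,E)$ be a connected undirected graph (finite or infinite). Then $G$ has no multiplex $M$ such that both $\widetilde M\neq V$ and $\widetilde M$ is maximal for inclusion in the family $\{\widetilde N: N \text{ a multiplex of } G\}$.
   Context: A graph $G=(V,E)$ has vertex set $V$ and edge set $E\subseteq V^2$; it is undirected if $E$ is irreflexive and symmetric. Implication classes: on $E$ define $(a,b)\Gamma(a',b')$ iff either $a=a'$ and $(b,b')\notin E$, or $b=b'$ and $(a,a')\notin E$; the classes of the transitive closure $\Gamma^*$ are the implication classes. For an implication class $A$, $A^{-1}=\{(b,a):(a,b)\in A\}$ and the color class is $\widehat A=A\cup A^{-1}$. A simplex of rank $r\ge1$ is a complete sub-graph $S=(V_S,E_S)$ of $G$ on $r+1$ vertices whose distinct undirected edges lie in distinct color classes. A multiplex is a set of edges $M(S)=\bigcup\{\widehat A:\widehat A\text{ a color class},\ \widehat A\cap E_S\neq\emptyset\}$ for a simplex $S$; $\widetilde N$ denotes the set of vertices spanned by a multiplex $N$. *)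

From Stdlib Require Import List Relations.
Import ListNotations.

Section Graphs.
Variable V : Type.
Variable E : V -> V -> Prop.

Definition undirected : Prop :=
  (forall x, ~ E x x) /\ (forall x y, E x y -> E y x).

Definition connected : Prop :=
  forall x y, clos_refl_trans V E x y.

Definition Gamma (e f : V * V) : Prop :=
  E (fst e) (snd e) /\ E (fst f) (snd f) /\
  ((fst e = fst f /\ ~ E (snd e) (snd f)) \/
   (snd e = snd f /\ ~ E (fst e) (fst f))).

(* Gamma^* : transitive closure; implication classes are its classes *)
Definition Gamma_star : V * V -> V * V -> Prop := clos_trans (V * V) Gamma.

Definition in_impl_class (e f : V * V) : Prop := E (fst e) (snd e) /\ (e = f \/ Gamma_star e f).

Definition rev_edge (e : V * V) : V * V := (snd e, fst e).

(* f lies in the color class A-hat = A u A^{-1}, where A is the implication class of e *)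
Definition in_color_class (e f : V * V) : Prop :=
  in_impl_class e f \/ in_impl_class e (rev_edge f).

(* simplex of rank r >= 1: r+1 distinct pairwise adjacent vertices, whose
   distinct undirected edges lie in distinct color classes *)
Definition simplex (S : list V) : Prop :=
  2 <= length S /\ NoDup S /\
  (forall x y, In x S -> In y S -> x <> y -> E x y) /\
  (forall x y u w, In x S -> In y S -> In u S -> In w S -> x <> y -> u <> w ->
     in_color_class (x, y) (u, w) -> (x = u /\ y = w) \/ (x = w /\ y = u)).

Definition multiplex_of (S : list V) (f : V * V) : Prop :=
  exists x y, In x S /\ In y S /\ x <> y /\ in_color_class (x, y) f.

Definition is_multiplex (M : V * V -> Prop) : Prop :=
  exists S, simplex S /\ forall f, M f <-> multiplex_of S f.

Definition span (M : V * V -> Prop) (v : V) : Prop :=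
  exists f, M f /\ (fst f = v \/ snd f = v).

End Graphs.

(* Let S be a simplex and W the vertex set spanned by M(S).  If a vertex o
   outside W is adjacent to one endpoint p of an edge pq of M(S), it is adjacent
   to q as well, for otherwise pq Gamma po would put o into W.  Propagating this
   through the colour classes shows that a vertex outside W adjacent to some
   vertex of W is adjacent to all of W; by connectedness such a vertex b exists
   when W <> V.  Now either some edge bs (s in S) has a colour class reaching
   every vertex of W, so that M({b, s}) spans W + b, or else the colour classes
   of the edges bs are separated from each other and from those of S, so that
   S + b is a simplex.  In both cases a multiplex spans strictly more than W. *)
From Stdlib Require Import List Relations Classical.
Import ListNotations.

Section ImplicationClasses.
Variables (V : Type) (E : V -> V -> Prop).

Lemma rev_edgeK g : rev_edge V (rev_edge V g) = g.
Proof. now destruct g. Qed.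

Lemma in_impl_class_refl e : E (fst e) (snd e) -> in_impl_class V E e e.
Proof. now split; [| left]. Qed.

Lemma in_impl_class_step e g h :
  in_impl_class V E e g -> Gamma V E g h -> in_impl_class V E e h.
Proof.
  intros [He [<- | Hg]] Hgh; split; auto; right.
  - now apply t_step.
  - now apply t_trans with g; [| apply t_step].
Qed.

Lemma in_impl_class_ind e (P : V * V -> Prop) :
  P e ->
  (forall g h, in_impl_class V E e g -> P g -> Gamma V E g h -> P h) ->
  forall g, in_impl_class V E e g -> P g.
Proof.
  intros Pe Pstep g [He [<- | Hg]]; auto.
  apply clos_trans_tn1 in Hg; induction Hg as [h Heh | h k Hhk Hg IH].
  - now apply (Pstep e h); [apply in_impl_class_refl | |].
  - apply (Pstep h k); auto.
    now split; [| right; apply clos_tn1_trans].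
Qed.

Lemma in_color_class_ind e (P : V * V -> Prop) :
  P e ->
  (forall g h, in_impl_class V E e g -> P g -> Gamma V E g h -> P h) ->
  (forall g, P g -> P (rev_edge V g)) ->
  forall f, in_color_class V E e f -> P f.
Proof.
  intros Pe Pstep Prev f [Hf | Hf].
  - exact (in_impl_class_ind e P Pe Pstep f Hf).
  - rewrite <- rev_edgeK; apply Prev.
    exact (in_impl_class_ind e P Pe Pstep _ Hf).
Qed.

Lemma in_color_class_rev e f :
  in_color_class V E e f -> in_color_class V E e (rev_edge V f).
Proof. intros [Hf | Hf]; [right | left]; now rewrite ?rev_edgeK. Qed.

(* Non-adjacent steps c -> c' give (b, c) Gamma (b, c'). *)
Lemma in_impl_class_nonadj_fst (R : V -> V -> Prop) b s :
  (forall x y, R x y -> ~ E x y) ->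
  (forall c, clos_refl_trans V R s c -> E b c) ->
  forall c, clos_refl_trans V R s c -> in_impl_class V E (b, s) (b, c).
Proof.
  intros HR Hb c Hc; apply clos_rt_rtn1 in Hc.
  induction Hc as [| c c' Hcc' Hc IH].
  - apply in_impl_class_refl, Hb, rt_refl.
  - assert (Hsc : clos_refl_trans V R s c) by now apply clos_rtn1_rt.
    assert (Hsc' : clos_refl_trans V R s c') by (apply rt_trans with c; auto using rt_step).
    apply in_impl_class_step with (b, c); [exact IH |].
    repeat split; simpl; auto.
Qed.

Lemma multiplex_of_rev S f :
  multiplex_of V E S f -> multiplex_of V E S (rev_edge V f).
Proof.
  intros (x & y & Hx & Hy & Hxy & Hf); exists x, y; repeat split; auto.
  now apply in_color_class_rev.
Qed.

Lemma multiplex_of_incl S T f :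
  incl S T -> multiplex_of V E S f -> multiplex_of V E T f.
Proof. intros HST (x & y & Hx & Hy & Hxy & Hf); exists x, y; repeat split; auto. Qed.

Lemma multiplex_of_pair S x y :
  In x S -> In y S -> x <> y -> E x y -> multiplex_of V E S (x, y).
Proof. intros; exists x, y; repeat split; auto; left; now apply in_impl_class_refl. Qed.

Lemma simplex_span S x : simplex V E S -> In x S -> span V (multiplex_of V E S) x.
Proof.
  intros (Hlen & Hnd & Hcl & _) Hx.
  assert (Hy : exists y, In y S /\ y <> x).
  { destruct S as [| s1 [| s2 S']]; simpl in Hlen;
      [inversion Hlen | inversion Hlen as [| ? H1]; inversion H1 |].
    inversion Hnd as [| ? ? Hs1 _]; subst.
    destruct (classic (s1 = x)) as [<- | Hne].
    - exists s2; split; [simpl; auto | intros ->; apply Hs1; simpl; auto].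
    - exists s1; simpl; auto. }
  destruct Hy as (y & Hy & Hyx).
  exists (x, y); split; [| left; reflexivity].
  apply multiplex_of_pair; auto.
Qed.

Lemma span_ext (M N : V * V -> Prop) v :
  (forall f, M f <-> N f) -> span V M v <-> span V N v.
Proof. intros HMN; split; intros (f & Hf & Hv); exists f; split; auto; now apply HMN. Qed.

End ImplicationClasses.

Section Undirected.
Variables (V : Type) (E : V -> V -> Prop).
Hypothesis E_sym : forall x y, E x y -> E y x.

Lemma Gamma_rev g h : Gamma V E g h -> Gamma V E (rev_edge V g) (rev_edge V h).
Proof.
  destruct g as [a b], h as [c d]; unfold Gamma, rev_edge; simpl.
  intros (Hab & Hcd & Hsh); split; [auto | split; [auto | tauto]].
Qed.

Lemma in_impl_class_rev e g :
  in_impl_class V E e g -> in_impl_class V E (rev_edge V e) (rev_edge V g).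
Proof.
  intros Hg; apply (in_impl_class_ind V E e (fun g => in_impl_class V E _ (rev_edge V g))); auto.
  - apply in_impl_class_refl; destruct e; apply E_sym, Hg.
  - intros g' h _ Hg' Hgh; eapply in_impl_class_step; [exact Hg' |].
    now apply Gamma_rev.
Qed.

Lemma in_color_class_edge e f : in_color_class V E e f -> E (fst f) (snd f).
Proof.
  intros Hf; apply (in_color_class_ind V E e (fun f => E (fst f) (snd f))); [| | | exact Hf].
  - destruct Hf as [Hf | Hf]; apply Hf.
  - now intros ? ? _ _ (_ & Hh & _).
  - intros [x y]; apply E_sym.
Qed.

Lemma in_color_class_step e f g :
  in_color_class V E e f -> Gamma V E f g -> in_color_class V E e g.
Proof.
  intros [Hf | Hf] Hfg; [left | right]; eapply in_impl_class_step; eauto.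
  now apply Gamma_rev.
Qed.

Lemma in_color_class_rev_l e f :
  in_color_class V E (rev_edge V e) f -> in_color_class V E e f.
Proof.
  intros [Hf | Hf]; apply in_impl_class_rev in Hf; rewrite rev_edgeK in Hf;
    [right | left; rewrite rev_edgeK in Hf]; exact Hf.
Qed.

Lemma in_impl_class_nonadj_snd (R : V -> V -> Prop) t s :
  (forall x y, R x y -> ~ E x y) ->
  (forall c, clos_refl_trans V R s c -> E c t) ->
  forall c, clos_refl_trans V R s c -> in_impl_class V E (s, t) (c, t).
Proof.
  intros HR Ht c Hc.
  apply (in_impl_class_rev (t, s) (t, c)).
  apply (in_impl_class_nonadj_fst V E R); auto.
Qed.

Lemma multiplex_of_step S f g :
  multiplex_of V E S f -> Gamma V E f g -> multiplex_of V E S g.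
Proof.
  intros (x & y & Hx & Hy & Hxy & Hf) Hfg; exists x, y; repeat split; auto.
  eapply in_color_class_step; eauto.
Qed.

Lemma multiplex_of_edge S f : multiplex_of V E S f -> E (fst f) (snd f).
Proof. intros (x & y & _ & _ & _ & Hf); eapply in_color_class_edge; eauto. Qed.

Lemma simplex_pair b s : b <> s -> E b s -> simplex V E [b; s].
Proof.
  intros Hbs Eb; split; [simpl; auto | split; [| split]].
  - constructor; [simpl; intuition | constructor; [simpl; auto | constructor]].
  - simpl; intros x y [<- | [<- | []]] [<- | [<- | []]] Hxy; auto; now contradiction Hxy.
  - simpl; intros x y u w [<- | [<- | []]] [<- | [<- | []]] [<- | [<- | []]]
      [<- | [<- | []]] Hxy Huw _; auto; (now contradiction Hxy) || now contradiction Huw.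
Qed.

End Undirected.

Lemma clos_refl_trans_crossing (A : Type) (R : A -> A -> Prop) (P : A -> Prop) x y :
  clos_refl_trans A R x y -> P x -> ~ P y -> exists a b, P a /\ ~ P b /\ R a b.
Proof.
  intros Hxy; induction (clos_rt_rt1n _ _ _ _ Hxy) as [| x z y Hxz Hzy IH]; intros Px Py.
  - contradiction.
  - destruct (classic (P z)) as [Pz | Pz]; eauto.
    apply IH; auto; now apply clos_rt1n_rt.
Qed.

Section SimplexSpan.
Variables (V : Type) (E : V -> V -> Prop).
Hypothesis E_sym : forall x y, E x y -> E y x.
Variable S : list V.
Hypothesis S_simplex : simplex V E S.

Let W := span V (multiplex_of V E S).

Definition adj_edge (o : V) (g : V * V) : Prop := E o (fst g) /\ E o (snd g).

Lemma multiplex_span f : multiplex_of V E S f -> W (fst f) /\ W (snd f).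
Proof. now split; exists f; split; [| left | | right]. Qed.

Lemma outside_adj_fst_snd o p q :
  ~ W o -> multiplex_of V E S (p, q) -> E o p -> E o q.
Proof.
  intros Ho Hpq Eop; apply NNPP; intros Eoq; apply Ho.
  apply (multiplex_span (p, o)), (multiplex_of_step V E E_sym S (p, q)); auto.
  split; [exact (multiplex_of_edge V E E_sym S _ Hpq) |].
  split; [simpl; auto | left; simpl; auto].
Qed.

Lemma outside_adj_edge o f :
  ~ W o -> multiplex_of V E S f -> E o (fst f) \/ E o (snd f) -> adj_edge o f.
Proof.
  intros Ho Hf [Ef | Ef]; split; auto; destruct f as [p q].
  - exact (outside_adj_fst_snd o p q Ho Hf Ef).
  - exact (outside_adj_fst_snd o q p Ho (multiplex_of_rev V E S _ Hf) Ef).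
Qed.

(* Gamma-related edges share an endpoint. *)
Lemma outside_adj_edge_Gamma o g h :
  ~ W o -> multiplex_of V E S g -> multiplex_of V E S h -> Gamma V E g h ->
  adj_edge o g <-> adj_edge o h.
Proof.
  intros Ho Hg Hh (_ & _ & [[Heq _] | [Heq _]]);
    split; intros [E1 E2]; apply outside_adj_edge; auto; rewrite ?Heq in *; auto.
Qed.

Lemma outside_adj_edge_iff o f :
  ~ W o -> multiplex_of V E S f -> (adj_edge o f <-> forall z, In z S -> E o z).
Proof.
  intros Ho (x & y & Hx & Hy & Hxy & Hf).
  assert (Hfxy : adj_edge o f <-> adj_edge o (x, y)).
  { apply (in_color_class_ind V E (x, y) (fun g => adj_edge o g <-> adj_edge o (x, y)));
      [reflexivity | | | exact Hf].
    - intros g h Hg IH Hgh; rewrite <- IH; symmetry.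
      apply outside_adj_edge_Gamma; auto; exists x, y; repeat split; auto; left; auto.
      eapply in_impl_class_step; eauto.
    - intros [p q]; unfold adj_edge; simpl; tauto. }
  rewrite Hfxy; split.
  - intros [Ex Ey] z Hz; destruct (classic (z = x)) as [-> | Hzx]; auto.
    apply (outside_adj_fst_snd o x z); auto.
    destruct S_simplex as (_ & _ & Hcl & _); apply multiplex_of_pair; auto.
  - intros HoS; split; apply HoS; auto.
Qed.

Lemma outside_adj_span o w w' : ~ W o -> W w -> E o w -> W w' -> E o w'.
Proof.
  intros Ho (f & Hf & Hw) Eow (f' & Hf' & Hw').
  assert (HoS : forall z, In z S -> E o z).
  { apply (outside_adj_edge_iff o f Ho Hf), outside_adj_edge; auto.
    destruct Hw as [<- | <-]; auto. }
  apply (outside_adj_edge_iff o f' Ho Hf') in HoS.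
  destruct Hw' as [<- | <-]; apply HoS.
Qed.

Let reach := clos_refl_trans V (fun x y => W x /\ W y /\ ~ E x y).

Lemma reach_span s x : W s -> reach s x -> W x.
Proof. intros Hs Hx; induction Hx as [? ? (_ & Hy & _) | | ]; auto. Qed.

(* If y were unreachable from s, every vertex reachable from s would be adjacent
   to y, so (s, y) and (s', y) would lie in one implication class. *)
Lemma reach_simplex s s' :
  In s S -> In s' S -> s <> s' -> reach s s' -> forall y, In y S -> reach s y.
Proof.
  intros Hs Hs' Hss' Hreach y Hy; apply NNPP; intros Ny.
  assert (Hadj : forall c, reach s c -> E c y).
  { intros c Hc; apply NNPP; intros Ncy; apply Ny.
    apply rt_trans with c; [exact Hc |]; apply rt_step; repeat split; auto.
    - apply (reach_span s); auto; now apply simplex_span.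
    - now apply simplex_span. }
  assert (Hsy : s <> y) by (intros ->; now apply Ny, rt_refl).
  assert (Hs'y : s' <> y) by (intros ->; now apply Ny).
  destruct S_simplex as (_ & _ & _ & Hcol).
  destruct (Hcol s y s' y Hs Hy Hs' Hy Hsy Hs'y) as [[? _] | [? _]]; auto.
  left; apply (in_impl_class_nonadj_snd V E E_sym (fun x y => W x /\ W y /\ ~ E x y));
    auto; tauto.
Qed.

Lemma reach_simplex_span s :
  (forall y, In y S -> reach s y) -> forall w, W w -> reach s w.
Proof.
  intros HsS w (f & (x & y & Hx & Hy & Hxy & Hf) & Hw).
  enough (Hends : reach s (fst f) /\ reach s (snd f)) by (destruct Hw as [<- | <-]; tauto).
  apply (in_color_class_ind V E (x, y) (fun g => reach s (fst g) /\ reach s (snd g)));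
    [split; auto | | | exact Hf].
  - intros g h Hg [Rg1 Rg2] Hgh.
    assert (Hgm : multiplex_of V E S g) by (exists x, y; repeat split; auto; left; auto).
    assert (Hhm : multiplex_of V E S h).
    { exists x, y; repeat split; auto; left; eapply in_impl_class_step; eauto. }
    destruct (multiplex_span g Hgm), (multiplex_span h Hhm).
    destruct Hgh as (_ & _ & [[<- Hn] | [<- Hn]]); split; auto.
    + apply rt_trans with (snd g); auto; now apply rt_step.
    + apply rt_trans with (fst g); auto; now apply rt_step.
  - intros [p q]; simpl; tauto.
Qed.

Section Apex.
Variable b : V.
Hypothesis b_outside : ~ W b.
Hypothesis b_adj : forall w, W w -> E b w.

Let covers s := forall w, W w -> span V (multiplex_of V E [b; s]) w.
Let apex u := ~ W u /\ forall w, W w -> E u w.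

Lemma reach_covers s : In s S -> (forall w, W w -> reach s w) -> covers s.
Proof.
  intros Hs Hall w Hw; exists (b, w); split; [| right; reflexivity].
  exists b, s; repeat split; simpl; auto.
  - intros ->; now apply b_outside, simplex_span.
  - left; apply (in_impl_class_nonadj_fst V E (fun x y => W x /\ W y /\ ~ E x y));
      [tauto | | now apply Hall].
    intros c Hc; apply b_adj, (reach_span s); auto; now apply simplex_span.
Qed.

Lemma impl_class_apex s :
  In s S -> ~ covers s ->
  forall g, in_impl_class V E (b, s) g -> apex (fst g) /\ reach s (snd g).
Proof.
  intros Hs Ncov; apply in_impl_class_ind; [split; [split; auto | apply rt_refl] |].
  intros g h Hg [[Wg Eg] Rg] Hgh.
  assert (Hh : in_impl_class V E (b, s) h) by (eapply in_impl_class_step; eauto).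
  assert (Wg2 : W (snd g)) by (apply (reach_span s); auto; now apply simplex_span).
  destruct Hgh as (_ & Eh & [[Hfst Hn] | [Hsnd Hn]]).
  - rewrite <- Hfst; split; [split; auto |].
    destruct (classic (W (snd h))) as [Wh | Wh].
    + apply rt_trans with (snd g); auto; apply rt_step; auto.
    + exfalso; apply Ncov; intros w Hw.
      assert (Nw : ~ E (snd h) w).
      { intros Ew; apply Hn, E_sym, (outside_adj_span (snd h) w); auto. }
      exists (fst h, w); split; [| right; reflexivity].
      exists b, s; repeat split; simpl; auto.
      * intros ->; now apply b_outside, simplex_span.
      * left; apply in_impl_class_step with h; auto.
        split; [exact Eh | split; [simpl; rewrite <- Hfst; auto | left; simpl; auto]].
  - rewrite <- Hsnd; split; auto.
    assert (Wh : ~ W (fst h)) by (intros Wh; now apply Hn, Eg).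
    split; auto; intros w Hw.
    apply (outside_adj_span (fst h) (snd g)); auto; now rewrite Hsnd.
Qed.

Lemma impl_class_apex_extension y u w :
  In y S -> (forall s, In s S -> ~ covers s) ->
  In u (b :: S) -> In w (b :: S) -> u <> w ->
  in_impl_class V E (b, y) (u, w) -> u = b /\ w = y.
Proof.
  intros Hy Ncov Hu Hw Huw Hc.
  destruct (impl_class_apex y Hy (Ncov y Hy) _ Hc) as [[Wu _] Ryw]; simpl in *.
  assert (u = b) as ->.
  { destruct Hu as [<- | Hu]; auto; exfalso; apply Wu; now apply simplex_span. }
  split; auto; destruct Hw as [<- | Hw]; [contradiction |].
  apply NNPP; intros Nyw; apply (Ncov y Hy).
  apply reach_covers; auto.
  apply reach_simplex_span, (reach_simplex y w); auto.
Qed.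

Lemma simplex_extension : (forall s, In s S -> ~ covers s) -> simplex V E (b :: S).
Proof.
  intros Ncov; destruct S_simplex as (Hlen & Hnd & Hcl & Hcol).
  assert (Sb : forall x, In x S -> x <> b) by (intros x Hx ->; now apply b_outside, simplex_span).
  assert (HbS : forall x, In x S -> E b x) by (intros; now apply b_adj, simplex_span).
  split; [simpl; auto | split; [constructor; auto; intros Hb; now apply (Sb b) | split]].
  - intros x y [<- | Hx] [<- | Hy] Hxy; auto; contradiction.
  - assert (Hbc : forall y u w, In y S -> In u (b :: S) -> In w (b :: S) -> u <> w ->
              in_color_class V E (b, y) (u, w) -> (b = u /\ y = w) \/ (b = w /\ y = u)).
    { intros y u w Hy Hu Hw Huw [Hc | Hc].
      - left; destruct (impl_class_apex_extension y u w); auto.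
      - right; destruct (impl_class_apex_extension y w u); auto. }
    intros x y u w [<- | Hx] [<- | Hy] Hu Hw Hxy Huw Hc; [contradiction | auto | |].
    + apply (in_color_class_rev_l V E E_sym (b, x)) in Hc.
      destruct (Hbc x u w); tauto.
    + assert (Hm : multiplex_of V E S (u, w)) by (exists x, y; repeat split; auto).
      destruct (multiplex_span _ Hm) as [Wu Ww]; simpl in *.
      destruct Hu as [<- | Hu]; [contradiction |].
      destruct Hw as [<- | Hw]; [contradiction |].
      auto.
Qed.

Lemma apex_simplex_exists :
  exists T, simplex V E T /\ In b T /\ forall v, W v -> span V (multiplex_of V E T) v.
Proof.
  destruct (classic (exists s, In s S /\ covers s)) as [(s & Hs & Hcov) | Ncov].
  - exists [b; s]; split; [| split; [simpl; auto | exact Hcov]].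
    apply (simplex_pair V E E_sym); [intros <-; apply b_outside | apply b_adj];
      now apply simplex_span.
  - exists (b :: S); split; [| split; [simpl; auto |]].
    + apply simplex_extension; eauto.
    + intros v (f & Hf & Hv); exists f; split; auto.
      apply (multiplex_of_incl V E S); auto; apply incl_tl, incl_refl.
Qed.

End Apex.

Lemma span_apex_exists :
  connected V E -> ~ (forall v, W v) ->
  exists b, ~ W b /\ forall w, W w -> E b w.
Proof.
  intros Hconn Hnot.
  destruct (not_all_ex_not _ _ Hnot) as [v Hv].
  assert (Hx : exists x, In x S).
  { destruct S_simplex as (Hlen & _); destruct S as [| x S']; [inversion Hlen |].
    exists x; simpl; auto. }
  destruct Hx as [x Hx].
  assert (Wx : W x) by now apply simplex_span.
  destruct (clos_refl_trans_crossing V E W x v (Hconn x v) Wx Hv) as (a & b & Wa & Wb & Eab).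
  exists b; split; auto; intros w Hw; apply (outside_adj_span b a); auto.
Qed.

End SimplexSpan.

Theorem lemma4p9 (V : Type) (E : V -> V -> Prop)
  (Hund : undirected V E) (Hconn : connected V E) :
  ~ (exists M : V * V -> Prop,
       is_multiplex V E M /\
       ~ (forall v, span V M v) /\
       (forall N : V * V -> Prop, is_multiplex V E N ->
          (forall v, span V M v -> span V N v) ->
          (forall v, span V N v -> span V M v))).
Proof.
  destruct Hund as [_ E_sym].
  intros (M & (S & HS & HM) & Hnot & Hmax).
  pose proof (fun v => span_ext V M (multiplex_of V E S) v HM) as HWM.
  assert (HnotW : ~ (forall v, span V (multiplex_of V E S) v))
    by (intros Hall; apply Hnot; intros v; apply HWM, Hall).
  destruct (span_apex_exists V E E_sym S HS Hconn HnotW) as (b & Hb & Hadj).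
  destruct (apex_simplex_exists V E E_sym S HS b Hb Hadj) as (T & HT & HbT & HWT).
  apply Hb, HWM, (Hmax (multiplex_of V E T)).
  - exists T; split; [exact HT | reflexivity].
  - intros v Hv; apply HWT, HWM, Hv.
  - now apply simplex_span.
Qed.
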